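(* Under the standing assumptions below, if $V\in C(\overline\Omega)$ is a viscosity solution of $F=0$ in $\Omega$, then $\mathcal J(V)=0$. In particular, the unique continuous viscosity solution of the Dirichlet problem $F(x,V,\nabla V,\nabla^2V)=0$ in $\Omega$, $V=g$ on $\partial\Omega$, satisfies $\mathcal J(V)=0$. Moreover, if $V\in C(\overline\Omega)$ satisfies $\mathcal J(V)=0$, then for $(\nu_X\otimes\nu_{\mathcal M})$-a.e. $(x,M)$ one has $F(\zeta_x,V(\zeta_x),M(x-\zeta_x),-M)\ge0$ whenever $\zeta_x\in\Omega$ and $F(\zeta^\star_x,V(\zeta^\star_x),-M(x-\zeta^\star_x),M)\le0$ whenever $\zeta^\star_x\in\Omega$.
   Context: Let $\Omega\subset\mathbb{R}^n$ be a bounded open set, $U\subset\mathbb{R}^m$ compact, $\beta\ge0$, and $f:\overline\Omega\times U\to\mathbb{R}^n$, $\Sigma:\overline\Omega\times U\to\mathbb{R}^{n\times n}$, $\ell:\overline\Omega\times U\to\mathbb{R}$ continuous, with $f,\Sigma$ Lipschitz in the state uniformly in the control and of linear growth; $a=\Sigma\Sigma^\top$. With $\mathbb S(n)$ the symmetric and $\mathbb S_{++}(n)$ the positive definite $n\times n$ matrices, define $H(x,p,A;c)=\ell(x,c)+p^\top f(x,c)+\tfrac12\operatorname{tr}(a(x,c)A)$ and $F(x,r,p,A)=\beta r-\inf_{c\in U}H(x,p,A;c)$. Standing assumptions: either $\beta>0$ or $\lambda I\preceq\Sigma\Sigma^\top\preceq\Lambda I$ on $\overline\Omega\times U$ for some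 $0<\lambda\le\Lambda<\infty$; $\partial\Omega$ is Lipschitz and $F$-regular; $g\in C(\partial\Omega)$. Viscosity (sub/super)solutions of $F=0$ in $\Omega$ are in the Crandall–Lions sense: a subsolution is u.s.c. on $\overline\Omega$ and satisfies $F(\zeta,V(\zeta),\nabla\phi(\zeta),\nabla^2\phi(\zeta))\le0$ whenever $\phi\in C^2(\Omega)$ and $V-\phi$ has a local max at $\zeta\in\Omega$; a supersolution is l.s.c. and satisfies $\ge0$ at local minima; a solution is both. Envelopes and penalty: for continuous $V$ and $(x,M)\in\overline\Omega\times\mathbb S_{++}(n)$ let $\zeta_x\in\arg\min_{\zeta\in\overline\Omega}\{V(\zeta)+\tfrac12(x-\zeta)^\top M(x-\zeta)\}$ and $\zeta^\star_x\in\arg\max_{\zeta\in\overline\Omega}\{V(\zeta)-\tfrac12(x-\zeta)^\top M(x-\zeta)\}$ (a fixed choice of contacts), and set $p^-=M(x-\zeta_x)$, $A^-=-M$, $p^+=-M(x-\zeta^\star_x)$, $A^+=M$. Define $\mathcal J_{\rm super}(x,M;V)=\max\{-F(\zeta_x,V(\zeta_x),p^-,A^-),0\}$ and $\mathcal J_{\rm sub}(x,M;V)=\max\{F(\zeta^\star_x,V(\zeta^\star_x),p^+,A^+),0\}$, each taken to be $0$ when the corresponding contact lies on $\partial\Omega$. Let $\nu_X$ be a probability measure on $\overline\Omega$ and $\nu_{\mathcal M}$ a probability measure on $\mathbb S_{++}(n)$, and $\mathcal J(V):=\mathbb E_{(x,M)\sim\nu_X\otimes\nu_{\mathcal M}}[\mathcal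 J_{\rm super}(x,M;V)+\mathcal J_{\rm sub}(x,M;V)]$. *)

From HB Require Import structures.
From mathcomp Require Import all_boot all_order all_algebra.
From mathcomp Require Import all_classical all_reals all_analysis.
Set Implicit Arguments. Unset Strict Implicit. Unset Printing Implicit Defensive.
Import Order.TTheory GRing.Theory Num.Theory.
Import numFieldNormedType.Exports.
Local Open Scope classical_set_scope.
Local Open Scope ring_scope.

Section defs.
Variables (R : realType) (n m : nat).

Definition vecB := g_sigma_algebraType (@open 'cV[R]_n).
Definition matB := g_sigma_algebraType (@open 'M[R]_n).

Definition dotv (u v : 'cV[R]_n) : R := (u^T *m v) 0 0.
Definition quad (A : 'M[R]_n) (v : 'cV[R]_n) : R := (v^T *m A *m v) 0 0.

Definition loewner_le (A B : 'M[R]_n) : Prop :=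
  forall v : 'cV[R]_n, quad A v <= quad B v.

Definition sym_mx (A : 'M[R]_n) : Prop := A^T = A.
Definition Spp (A : 'M[R]_n) : Prop :=
  sym_mx A /\ forall v : 'cV[R]_n, v != 0 -> 0 < quad A v.

Definition partial (i : 'I_n) (phi : 'cV[R]_n -> R) : 'cV[R]_n -> R :=
  fun y => 'D_(delta_mx i 0) phi y.
Definition grad (phi : 'cV[R]_n -> R) (x : 'cV[R]_n) : 'cV[R]_n :=
  \col_i partial i phi x.
Definition hess (phi : 'cV[R]_n -> R) (x : 'cV[R]_n) : 'M[R]_n :=
  \matrix_(i, j) partial j (partial i phi) x.

Definition C2_on (Omega : set 'cV[R]_n) (phi : 'cV[R]_n -> R) : Prop :=
  (forall x, Omega x -> differentiable phi x) /\
  (forall i x, Omega x -> differentiable (partial i phi) x) /\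
  (forall i j x, Omega x -> {for x, continuous (partial j (partial i phi))}).

Definition usc_on (D : set 'cV[R]_n) (V : 'cV[R]_n -> R) : Prop :=
  forall x, D x -> forall e : R, 0 < e -> \forall y \near x, D y -> V y < V x + e.
Definition lsc_on (D : set 'cV[R]_n) (V : 'cV[R]_n -> R) : Prop :=
  forall x, D x -> forall e : R, 0 < e -> \forall y \near x, D y -> V x - e < V y.

Variables (beta : R) (U : set 'cV[R]_m)
  (f : 'cV[R]_n -> 'cV[R]_m -> 'cV[R]_n)
  (Sigma : 'cV[R]_n -> 'cV[R]_m -> 'M[R]_n)
  (ell : 'cV[R]_n -> 'cV[R]_m -> R).

Definition diffusion (x : 'cV[R]_n) (c : 'cV[R]_m) : 'M[R]_n :=
  Sigma x c *m (Sigma x c)^T.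

Definition Ham (x p : 'cV[R]_n) (A : 'M[R]_n) (c : 'cV[R]_m) : R :=
  ell x c + dotv p (f x c) + 2^-1 * \tr (diffusion x c *m A).

Definition Fop (x : 'cV[R]_n) (r : R) (p : 'cV[R]_n) (A : 'M[R]_n) : R :=
  beta * r - inf [set Ham x p A c | c in U].

Definition visc_sub (Omega : set 'cV[R]_n) (V : 'cV[R]_n -> R) : Prop :=
  usc_on (closure Omega) V /\
  forall (phi : 'cV[R]_n -> R) (z : 'cV[R]_n), C2_on Omega phi -> Omega z ->
    (\forall y \near z, V y - phi y <= V z - phi z) ->
    Fop z (V z) (grad phi z) (hess phi z) <= 0.
Definition visc_super (Omega : set 'cV[R]_n) (V : 'cV[R]_n -> R) : Prop :=
  lsc_on (closure Omega) V /\
  forall (phi : 'cV[R]_n -> R) (z : 'cV[R]_n), C2_on Omega phi -> Omega z ->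
    (\forall y \near z, V z - phi z <= V y - phi y) ->
    Fop z (V z) (grad phi z) (hess phi z) >= 0.
Definition visc_sol (Omega : set 'cV[R]_n) (V : 'cV[R]_n -> R) : Prop :=
  visc_sub Omega V /\ visc_super Omega V.

Definition is_inf_contact (Omega : set 'cV[R]_n) (V : 'cV[R]_n -> R)
    (x : 'cV[R]_n) (M : 'M[R]_n) (z : 'cV[R]_n) : Prop :=
  closure Omega z /\ forall w, closure Omega w ->
    V z + 2^-1 * quad M (x - z) <= V w + 2^-1 * quad M (x - w).
Definition is_sup_contact (Omega : set 'cV[R]_n) (V : 'cV[R]_n -> R)
    (x : 'cV[R]_n) (M : 'M[R]_n) (z : 'cV[R]_n) : Prop :=
  closure Omega z /\ forall w, closure Omega w ->
    V w - 2^-1 * quad M (x - w) <= V z - 2^-1 * quad M (x - z).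

Definition Jsuper (Omega : set 'cV[R]_n) (V : 'cV[R]_n -> R)
    (zeta : 'cV[R]_n -> 'M[R]_n -> 'cV[R]_n) (x : 'cV[R]_n) (M : 'M[R]_n) : R :=
  let z := zeta x M in
  if `[< Omega z >] then Num.max (- Fop z (V z) (M *m (x - z)) (- M)) 0 else 0.
Definition Jsub (Omega : set 'cV[R]_n) (V : 'cV[R]_n -> R)
    (zetas : 'cV[R]_n -> 'M[R]_n -> 'cV[R]_n) (x : 'cV[R]_n) (M : 'M[R]_n) : R :=
  let z := zetas x M in
  if `[< Omega z >] then Num.max (Fop z (V z) (- (M *m (x - z))) M) 0 else 0.

Definition Jintegrand (Omega : set 'cV[R]_n) (V : 'cV[R]_n -> R)
    (zeta zetas : 'cV[R]_n -> 'M[R]_n -> 'cV[R]_n) (z : vecB * matB) : R :=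
  Jsuper Omega V zeta z.1 z.2 + Jsub Omega V zetas z.1 z.2.
Definition Jcost (nuX : probability vecB R) (nuM : probability matB R)
    (Omega : set 'cV[R]_n) (V : 'cV[R]_n -> R)
    (zeta zetas : 'cV[R]_n -> 'M[R]_n -> 'cV[R]_n) : \bar R :=
  (\int[nuX \x nuM]_z (Jintegrand Omega V zeta zetas z)%:E)%E.

End defs.

(* At an interior contact point z of the inf-convolution of V with the
   quadratic 1/2 (x - .)^T M (x - .), the concave quadratic
   y |-> -1/2 (x - y)^T M (x - y) touches V from below, so it is an admissible
   test function for the supersolution property; its gradient and Hessian at z
   are M (x - z) and -M, which is exactly the pair at which J_super evaluates
   F. Symmetrically J_sub vanishes for subsolutions. Thus the nonnegative
   integrand of J vanishes on closure Omega x S_{++}(n), a set of full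
   (nuX x nuM)-measure, and conversely a nonnegative integrand with zero
   integral vanishes almost everywhere. S_{++}(n) is Borel because, among
   symmetric matrices, positive definite = positive semidefinite (closed) and
   invertible (open). *)

From HB Require Import structures.
From mathcomp Require Import all_boot all_order all_algebra.
From mathcomp Require Import all_classical all_reals all_analysis.
From mathcomp Require Import ring lra fingroup perm measurable_realfun.
Set Implicit Arguments. Unset Strict Implicit. Unset Printing Implicit Defensive.
Import Order.TTheory GRing.Theory Num.Theory.
Import numFieldNormedType.Exports.
Local Open Scope classical_set_scope.
Local Open Scope ring_scope.

Lemma lin_coef_eq0_of_quadratic_ge0 (R : realFieldType) (a b : R) :
  (forall t, 0 <= t * a + t ^+ 2 * b) -> a = 0.
Proof.
move=> ge0; pose s := (`|b| + 1)^-1.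
have s_gt0 : 0 < s by rewrite invr_gt0 ltr_wpDl.
have s_def : s * `|b| = 1 - s.
  have : s * (`|b| + 1) = 1 by rewrite mulVf // gt_eqF // ltr_wpDl.
  by rewrite mulrDr mulr1; lra.
(* at t = - a s the value is at most - (a s)^2 *)
have quad_le : (- a * s) ^+ 2 * b <= a ^+ 2 * s * (1 - s).
  by rewrite -s_def exprMn sqrrN !mulrA ler_wpM2l ?ler_norm // -mulrA -expr2 mulr_ge0 ?sqr_ge0.
have : (a * s) ^+ 2 <= 0 by have := ge0 (- a * s); rewrite exprMn; nra.
rewrite le_eqVlt ltNge sqr_ge0 orbF sqrf_eq0 mulf_eq0 (gt_eqF s_gt0) orbF.
by move/eqP.
Qed.

Section quadratic_form.
Variables (R : realType) (n : nat).
Implicit Types (M : 'M[R]_n) (v w : 'cV[R]_n).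

Lemma quad0 M : quad M 0 = 0.
Proof. by rewrite /quad mulmx0 mxE. Qed.

Lemma dotv_delta i w : dotv (delta_mx i 0) w = w i 0.
Proof. by rewrite /dotv trmx_delta -rowE mxE. Qed.

Lemma quadBZ M w v (h : R) : M^T = M ->
  quad M (w - h *: v) = quad M w + h * (- 2 * dotv v (M *m w)) + h ^+ 2 * quad M v.
Proof.
move=> sM; have trmx11 (A : 'M[R]_1) : A^T = A.
  by apply/matrixP => i j; rewrite !ord1 mxE.
have sym_form : w^T *m M *m v = v^T *m M *m w.
  by rewrite -[LHS]trmx11 !trmx_mul trmxK sM mulmxA.
rewrite /quad /dotv [(w - _)^T]linearB /= [(h *: v)^T]linearZ /= !mulmxBl !mulmxBr.
by rewrite -!scalemxAl -!scalemxAr sym_form mulmxA !mxE; ring.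
Qed.

Lemma psd_quad_eq0 M v : M^T = M -> (forall w, 0 <= quad M w) ->
  quad M v = 0 -> M *m v = 0.
Proof.
move=> sM psd qv0; apply/matrixP => i j; rewrite ord1 [RHS]mxE -dotv_delta.
have /eqP : - 2 * dotv (delta_mx i 0) (M *m v) = 0.
  apply: (@lin_coef_eq0_of_quadratic_ge0 _ _ (quad M (delta_mx i 0))) => t.
  by have := psd (v - t *: delta_mx i 0); rewrite quadBZ // qv0 add0r.
by rewrite mulf_eq0 oppr_eq0 pnatr_eq0 => /eqP.
Qed.

Lemma SppE M :
  Spp M <-> [/\ M^T = M, forall v, 0 <= quad M v & \det M != 0].
Proof.
split=> [[sM pd]|[sM psd detM]].
  split=> // [v|].
    by have [->|/pd/ltW//] := eqVneq v 0; rewrite quad0.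
  apply/negP => /det0P[v v0 vM].
  have : 0 < quad M v^T by rewrite pd // trmx_eq0.
  by rewrite /quad trmxK -mulmxA -[M in M *m v^T]sM -trmx_mul vM trmx0 mulmx0 mxE ltxx.
split=> // v v0; rewrite lt_neqAle psd andbT eq_sym; apply: contraNN v0 => /eqP qv0.
have uM : M \in unitmx by rewrite unitmxE unitfE.
by rewrite -(mulKmx uM v) (psd_quad_eq0 sM psd qv0) mulmx0.
Qed.
End quadratic_form.

Section derivatives.
Variables (R : realType) (V : normedModType R).

Lemma derive_quadratic_increment (g : V -> R) (y v : V) (a b : R) :
  (forall h : R, g (h *: v + y) - g y = h * a + h ^+ 2 * b) -> 'D_v g y = a.
Proof.
move=> incr; apply: cvg_lim => //.
have lin_cvg : (fun h : R => a + h * b) @ 0^' --> a.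
  have : (fun h : R => a + h * b) @ 0 --> a + 0 * b.
    by apply: cvgD; [exact: cvg_cst|apply: cvgMl; exact: cvg_id].
  by rewrite mul0r addr0 => /cvg_within_filter; apply.
apply: cvg_trans lin_cvg; apply: near_eq_cvg; near=> h.
have h_neq0 : h != 0 by near: h; exact: nbhs_dnbhs_neq.
by rewrite /= incr expr2 -mulrA -mulrDr /GRing.scale /= mulKf.
Unshelve. all: by end_near. Qed.

Lemma differentiable_big_sum (I : Type) (r : seq I) (P : pred I)
    (F : I -> V -> R) x :
  (forall i, differentiable (F i) x) -> differentiable (\sum_(i <- r | P i) F i) x.
Proof.
move=> dF; apply: (big_ind (fun g : V -> R => differentiable g x)) => // f g df dg.
exact: differentiableD.
Qed.

Lemma differentiable_big_prod (I : Type) (r : seq I) (P : pred I)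
    (F : I -> V -> R) x :
  (forall i, differentiable (F i) x) -> differentiable (\prod_(i <- r | P i) F i) x.
Proof.
move=> dF; apply: (big_ind (fun g : V -> R => differentiable g x)) => // f g df dg.
exact: differentiableM.
Qed.

End derivatives.

Section quad_test.
Variables (R : realType) (n : nat) (c : R) (M : 'M[R]_n) (x : 'cV[R]_n).
Hypothesis sM : M^T = M.

Definition quad_test : 'cV[R]_n -> R := fun y => c * quad M (x - y).

Let shiftE (h : R) (v y : 'cV[R]_n) : x - (h *: v + y) = (x - y) - h *: v.
Proof. by rewrite opprD addrA addrAC. Qed.

Lemma partial_quad_test i :
  partial i quad_test = fun y => - 2 * c * (M *m (x - y)) i 0.
Proof.
apply/funext => y; apply: (derive_quadratic_increment (b := c * quad M (delta_mx i 0))) => h.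
by rewrite /quad_test shiftE quadBZ // dotv_delta; ring.
Qed.

Lemma partial2_quad_test i j :
  partial j (partial i quad_test) = cst (2 * c * M i j).
Proof.
apply/funext => y; rewrite partial_quad_test.
apply: (derive_quadratic_increment (b := 0)) => h.
by rewrite shiftE mulmxBr -scalemxAr -colE !mxE /=; ring.
Qed.

Lemma grad_quad_test y : grad quad_test y = (- 2 * c) *: (M *m (x - y)).
Proof. by apply/matrixP => i j; rewrite ord1 [LHS]mxE [RHS]mxE partial_quad_test. Qed.

Lemma hess_quad_test y : hess quad_test y = (2 * c) *: M.
Proof. by apply/matrixP => i j; rewrite [LHS]mxE [RHS]mxE partial2_quad_test. Qed.

Lemma differentiable_coordB i y :
  differentiable (fun y : 'cV[R]_n => (x - y) i 0) y.
Proof.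
have -> : (fun y : 'cV[R]_n => (x - y) i 0) = cst (x i 0) - fun y => y i 0.
  by apply/funext => z; rewrite !mxE.
by apply: differentiableB; [exact: differentiable_cst|exact: differentiable_coord].
Qed.

Lemma differentiable_affine_coord (A : 'M[R]_n) i y :
  differentiable (fun y : 'cV[R]_n => (A *m (x - y)) i 0) y.
Proof.
have -> : (fun y : 'cV[R]_n => (A *m (x - y)) i 0) =
    \sum_(k < n) (cst (A i k) * fun y : 'cV[R]_n => (x - y) k 0).
  by apply/funext => z; rewrite fct_sumE mxE.
apply: differentiable_big_sum => k; apply: differentiableM => //.
exact: differentiable_coordB.
Qed.

Lemma C2_on_quad_test (Omega : set 'cV[R]_n) : C2_on Omega quad_test.
Proof.
split; [|split] => [y _|i y _|i j y _]; last first.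
- by rewrite partial2_quad_test; exact: cst_continuous.
- rewrite partial_quad_test; apply: differentiableM => //.
  exact: differentiable_affine_coord.
have -> : quad_test = cst c * \sum_(k < n)
    ((fun y => (x - y) k 0) * fun y => (M *m (x - y)) k 0).
  apply/funext => z; rewrite /quad_test /quad fct_sumE /= -mulmxA mxE.
  by congr (_ * _); apply: eq_bigr => k _; rewrite mxE.
apply: differentiableM => //; apply: differentiable_big_sum => k.
apply: differentiableM; [exact: differentiable_coordB|exact: differentiable_affine_coord].
Qed.

End quad_test.

Section penalty.
Variables (R : realType) (n m : nat) (beta : R) (U : set 'cV[R]_m)
  (f : 'cV[R]_n -> 'cV[R]_m -> 'cV[R]_n)
  (Sigma : 'cV[R]_n -> 'cV[R]_m -> 'M[R]_n)
  (ell : 'cV[R]_n -> 'cV[R]_m -> R)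
  (Omega : set 'cV[R]_n) (V : 'cV[R]_n -> R).
Hypothesis oO : open Omega.

Local Notation F := (Fop beta U f Sigma ell).

Let two_half : (2 : R) * 2^-1 = 1.
Proof. by rewrite mulfV // pnatr_eq0. Qed.

Let near_interior (z : 'cV[R]_n) : Omega z -> \forall y \near z, closure Omega y.
Proof.
move=> Oz; have near_Omega : \forall y \near z, Omega y by exact: oO.
by apply: filterS near_Omega; exact: subset_closure.
Qed.

Lemma visc_super_inf_contact x M z : M^T = M ->
  visc_super beta U f Sigma ell Omega V ->
  is_inf_contact Omega V x M z -> Omega z ->
  0 <= F z (V z) (M *m (x - z)) (- M).
Proof.
move=> sM [_ super] [_ zmin] Oz.
have := super _ z (C2_on_quad_test (- 2^-1) x sM Omega) Oz.
rewrite grad_quad_test // hess_quad_test // !mulrN !mulNr opprK two_half.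
rewrite scale1r scaleN1r; apply; apply: filterS (near_interior Oz) => y Oy.
by rewrite /quad_test !mulNr !opprK; exact: zmin.
Qed.

Lemma visc_sub_sup_contact x M z : M^T = M ->
  visc_sub beta U f Sigma ell Omega V ->
  is_sup_contact Omega V x M z -> Omega z ->
  F z (V z) (- (M *m (x - z))) M <= 0.
Proof.
move=> sM [_ sub] [_ zmax] Oz.
have := sub _ z (C2_on_quad_test (2^-1) x sM Omega) Oz.
rewrite grad_quad_test // hess_quad_test // !mulNr two_half scale1r scaleN1r.
by apply; apply: filterS (near_interior Oz) => y Oy; exact: zmax.
Qed.

Variables (zeta zetas : 'cV[R]_n -> 'M[R]_n -> 'cV[R]_n).

Lemma Jsuper_ge0 x M : 0 <= Jsuper beta U f Sigma ell Omega V zeta x M.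
Proof. by rewrite /Jsuper; case: asboolP; rewrite ?le_max lexx ?orbT. Qed.

Lemma Jsub_ge0 x M : 0 <= Jsub beta U f Sigma ell Omega V zetas x M.
Proof. by rewrite /Jsub; case: asboolP; rewrite ?le_max lexx ?orbT. Qed.

Lemma Jintegrand_ge0 xM : 0 <= Jintegrand beta U f Sigma ell Omega V zeta zetas xM.
Proof. exact: addr_ge0 (Jsuper_ge0 _ _) (Jsub_ge0 _ _). Qed.

Lemma Jsuper_eq0P x M : let z := zeta x M in
  Jsuper beta U f Sigma ell Omega V zeta x M = 0 <->
  (Omega z -> 0 <= F z (V z) (M *m (x - z)) (- M)).
Proof.
rewrite /Jsuper /=; case: asboolP => Oz; last by split.
by rewrite -oppr_le0; split=> [/max_idPr|/(_ Oz)/max_idPr].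
Qed.

Lemma Jsub_eq0P x M : let z := zetas x M in
  Jsub beta U f Sigma ell Omega V zetas x M = 0 <->
  (Omega z -> F z (V z) (- (M *m (x - z))) M <= 0).
Proof.
rewrite /Jsub /=; case: asboolP => Oz; last by split.
by split=> [/max_idPr|/(_ Oz)/max_idPr].
Qed.

Lemma Jintegrand_eq0P x M :
  Jintegrand beta U f Sigma ell Omega V zeta zetas (x, M) = 0 <->
  Jsuper beta U f Sigma ell Omega V zeta x M = 0 /\
  Jsub beta U f Sigma ell Omega V zetas x M = 0.
Proof.
rewrite /Jintegrand /=; split=> [/eqP|[-> ->]]; last exact: addr0.
by rewrite paddr_eq0 ?Jsuper_ge0 ?Jsub_ge0 // => /andP[/eqP ? /eqP ?].
Qed.

Lemma visc_sol_Jintegrand_eq0 x M :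
  visc_sol beta U f Sigma ell Omega V -> Spp M ->
  is_inf_contact Omega V x M (zeta x M) -> is_sup_contact Omega V x M (zetas x M) ->
  Jintegrand beta U f Sigma ell Omega V zeta zetas (x, M) = 0.
Proof.
move=> [sub super] [sM _] inf_contact sup_contact; apply/Jintegrand_eq0P; split.
  by apply/Jsuper_eq0P; exact: visc_super_inf_contact.
by apply/Jsub_eq0P; exact: visc_sub_sup_contact.
Qed.

End penalty.

Section borel.
Variable T : ptopologicalType.

Lemma borel_open_measurable (A : set (g_sigma_algebraType (@open T))) :
  open (A : set T) -> measurable A.
Proof. exact: sub_sigma_algebra. Qed.

Lemma borel_closed_measurable (A : set (g_sigma_algebraType (@open T))) :
  closed (A : set T) -> measurable A.
Proof.
move=> cA; rewrite -[A]setCK; apply: measurableC; apply: borel_open_measurable.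
exact: closed_openC.
Qed.

End borel.

Section Spp_measurable.
Variables (R : realType) (n : nat).

Lemma continuous_det : continuous (fun A : 'M[R]_n => \det A).
Proof.
move=> M; apply: differentiable_continuous.
have -> : (fun A : 'M[R]_n => \det A) = \sum_(s : 'S_n)
    (cst ((-1) ^+ s : R) * \prod_(i < n) fun A : 'M[R]_n => A i (s i)).
  by apply/funext => A; rewrite fct_sumE; apply: eq_bigr => s _; rewrite /= fct_prodE.
apply: differentiable_big_sum => s; apply: differentiableM => //.
by apply: differentiable_big_prod => i; exact: differentiable_coord.
Qed.

Lemma continuous_quad v : continuous (fun A : 'M[R]_n => quad A v).
Proof.
move=> M; apply: differentiable_continuous.
have -> : (fun A : 'M[R]_n => quad A v) = \sum_(j < n)
    (\sum_(i < n) (cst (v i 0) * fun A : 'M[R]_n => A i j)) * cst (v j 0).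
  apply/funext => A; rewrite /quad fct_sumE mxE; apply: eq_bigr => j _.
  by rewrite fct_sumE /= mxE; congr (_ * _); apply: eq_bigr => i _; rewrite mxE.
apply: differentiable_big_sum => j; apply: differentiableM => //.
apply: differentiable_big_sum => i; apply: differentiableM => //.
exact: differentiable_coord.
Qed.

Lemma measurable_Spp : measurable (@Spp R n : set (matB R n)).
Proof.
pose sym := \bigcap_(ij in [set: 'I_n * 'I_n])
  ((fun A : 'M[R]_n => A ij.1 ij.2 - A ij.2 ij.1) @^-1` [set 0]).
pose psd := \bigcap_(v in [set: 'cV[R]_n])
  ((fun A : 'M[R]_n => quad A v) @^-1` [set x | 0 <= x]).
have -> : (@Spp R n : set (matB R n)) =
    sym `&` psd `&` (fun A : 'M[R]_n => \det A) @^-1` [set x | x != 0].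
  apply/seteqP; split=> A.
    case/SppE=> sA psdA detA; split=> //; split=> [[i j] _|v _] //=.
    by rewrite -{1}sA mxE subrr.
  case=> -[symA psdA] detA; apply/SppE; split=> //; last by move=> v; exact: psdA.
  apply/matrixP => i j; rewrite mxE; apply/eqP; rewrite -subr_eq0.
  by apply/eqP; exact: (symA (j, i)).
apply: measurableI; last first.
  apply: borel_open_measurable; apply: open_comp; last exact: open_neq.
  by move=> A _; exact: continuous_det.
apply: borel_closed_measurable; apply: closedI.
  apply: closed_bigI => ij _; apply: preimage_closed; last exact: closed_eq.
  by move=> A _; apply: continuousB; exact: coord_continuous.
apply: closed_bigI => v _; apply: preimage_closed; last exact: closed_ge.
by move=> A _; exact: continuous_quad.
Qed.

End Spp_measurable.

Section ae_integral.
Context d (T : measurableType d) (R : realType).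

Lemma ge0_integral_eq0P (mu : {measure set T -> \bar R}) (f : T -> R) :
  measurable_fun setT f -> (forall x, 0 <= f x) ->
  (\int[mu]_x (f x)%:E = 0)%E <-> {ae mu, forall x, f x = 0}.
Proof.
move=> mf f_ge0.
have -> : (\int[mu]_x (f x)%:E = \int[mu]_x `|(f x)%:E|)%E.
  by apply: eq_integral => x _; rewrite gee0_abs // lee_fin.
rewrite (ae_eq_integral_abs _ measurableT ((measurable_EFinP _ _).2 mf)).
by split; apply: filterS => x fx0; [case: (fx0 I)|move=> _; rewrite /= fx0].
Qed.

Lemma probability1_ae (P : probability T R) (A : set T) :
  measurable A -> P A = 1%E -> {ae P, forall x, A x}.
Proof.
move=> mA PA; exists (~` A); split; first exact: measurableC.
  by rewrite probability_setC // PA subee.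
by move=> x.
Qed.

End ae_integral.

Theorem corollary2p11 (R : realType) (n m : nat)
  (Omega : set 'cV[R]_n) (U : set 'cV[R]_m) (beta : R)
  (f : 'cV[R]_n -> 'cV[R]_m -> 'cV[R]_n)
  (Sigma : 'cV[R]_n -> 'cV[R]_m -> 'M[R]_n)
  (ell : 'cV[R]_n -> 'cV[R]_m -> R)
  (nuX : probability (vecB R n) R) (nuM : probability (matB R n) R) :
  open Omega -> bounded_set Omega ->
  compact U -> U !=set0 -> 0 <= beta ->
  {within closure Omega `*` U, continuous (fun xc => f xc.1 xc.2)} ->
  {within closure Omega `*` U, continuous (fun xc => Sigma xc.1 xc.2)} ->
  {within closure Omega `*` U, continuous (fun xc => ell xc.1 xc.2)} ->
  (exists L : R, forall x y c, closure Omega x -> closure Omega y -> U c ->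
     `|f x c - f y c| <= L * `|x - y|) ->
  (exists L : R, forall x y c, closure Omega x -> closure Omega y -> U c ->
     `|Sigma x c - Sigma y c| <= L * `|x - y|) ->
  (exists K : R, forall x c, closure Omega x -> U c ->
     `|f x c| <= K * (1 + `|x|)) ->
  (exists K : R, forall x c, closure Omega x -> U c ->
     `|Sigma x c| <= K * (1 + `|x|)) ->
  (0 < beta \/ exists lam Lam : R, 0 < lam /\ lam <= Lam /\
     forall x c, closure Omega x -> U c ->
       loewner_le lam%:M (diffusion Sigma x c) /\
       loewner_le (diffusion Sigma x c) Lam%:M) ->
  nuX (closure Omega : set (vecB R n)) = 1%E ->
  nuM (@Spp R n : set (matB R n)) = 1%E ->
  (* (1) every continuous viscosity solution has zero penalty *)
  (forall (V : 'cV[R]_n -> R) (zeta zetas : 'cV[R]_n -> 'M[R]_n -> 'cV[R]_n),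
     {within closure Omega, continuous V} ->
     visc_sol beta U f Sigma ell Omega V ->
     (forall x M, closure Omega x -> Spp M ->
        is_inf_contact Omega V x M (zeta x M) /\
        is_sup_contact Omega V x M (zetas x M)) ->
     measurable_fun setT
       (Jintegrand beta U f Sigma ell Omega V zeta zetas) ->
     Jcost beta U f Sigma ell nuX nuM Omega V zeta zetas = 0%E) /\
  (* (2) in particular, the continuous viscosity solution of the Dirichlet
         problem with boundary data g has zero penalty *)
  (forall (g : 'cV[R]_n -> R) (V : 'cV[R]_n -> R)
          (zeta zetas : 'cV[R]_n -> 'M[R]_n -> 'cV[R]_n),
     {within closure Omega `\` Omega, continuous g} ->
     {within closure Omega, continuous V} ->
     visc_sol beta U f Sigma ell Omega V ->
     (forall x, (closure Omega `\` Omega) x -> V x = g x) ->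
     (forall x M, closure Omega x -> Spp M ->
        is_inf_contact Omega V x M (zeta x M) /\
        is_sup_contact Omega V x M (zetas x M)) ->
     measurable_fun setT
       (Jintegrand beta U f Sigma ell Omega V zeta zetas) ->
     Jcost beta U f Sigma ell nuX nuM Omega V zeta zetas = 0%E) /\
  (* (3) zero penalty gives the viscosity inequalities at a.e. contact *)
  (forall (V : 'cV[R]_n -> R) (zeta zetas : 'cV[R]_n -> 'M[R]_n -> 'cV[R]_n),
     {within closure Omega, continuous V} ->
     (forall x M, closure Omega x -> Spp M ->
        is_inf_contact Omega V x M (zeta x M) /\
        is_sup_contact Omega V x M (zetas x M)) ->
     measurable_fun setT
       (Jintegrand beta U f Sigma ell Omega V zeta zetas) ->
     Jcost beta U f Sigma ell nuX nuM Omega V zeta zetas = 0%E ->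
     {ae (nuX \x nuM)%E, forall xM : vecB R n * matB R n,
        (Omega (zeta xM.1 xM.2) ->
           0 <= Fop beta U f Sigma ell (zeta xM.1 xM.2) (V (zeta xM.1 xM.2))
                  (xM.2 *m (xM.1 - zeta xM.1 xM.2)) (- xM.2)) /\
        (Omega (zetas xM.1 xM.2) ->
           Fop beta U f Sigma ell (zetas xM.1 xM.2) (V (zetas xM.1 xM.2))
                  (- (xM.2 *m (xM.1 - zetas xM.1 xM.2))) xM.2 <= 0)}).
Proof.
move=> oO _ _ _ _ _ _ _ _ _ _ _ _ nuX1 nuM1.
have domain_ae : {ae (nuX \x nuM)%E, forall xM : vecB R n * matB R n,
    closure Omega xM.1 /\ Spp xM.2}.
  have mO : measurable (closure Omega : set (vecB R n)).
    by apply: borel_closed_measurable; exact: closed_closure.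
  apply: (@probability1_ae _ _ _ _
    ((closure Omega : set (vecB R n)) `*` (@Spp R n : set (matB R n)))).
    by apply: measurableX => //; exact: measurable_Spp.
  rewrite /= product_measure1E //; last exact: measurable_Spp.
  exact: etrans (f_equal2 _ nuX1 nuM1) (mule1 1).
have visc_sol_Jcost_eq0 V zeta zetas : visc_sol beta U f Sigma ell Omega V ->
    (forall x M, closure Omega x -> Spp M ->
       is_inf_contact Omega V x M (zeta x M) /\
       is_sup_contact Omega V x M (zetas x M)) ->
    measurable_fun setT (Jintegrand beta U f Sigma ell Omega V zeta zetas) ->
    Jcost beta U f Sigma ell nuX nuM Omega V zeta zetas = 0%E.
  move=> Vsol contacts mJ; apply/ge0_integral_eq0P => //; first exact: Jintegrand_ge0.
  apply: filterS domain_ae => -[x M] [/= Ox SM]; have [inf_c sup_c] := contacts x M Ox SM.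
  exact: visc_sol_Jintegrand_eq0.
split; [|split].
- by move=> V zeta zetas _ Vsol; exact: visc_sol_Jcost_eq0 Vsol.
- by move=> g V zeta zetas _ _ Vsol _; exact: visc_sol_Jcost_eq0 Vsol.
move=> V zeta zetas _ _ mJ J0.
have [/(_ J0) J_ae _] := ge0_integral_eq0P (nuX \x nuM)%E mJ
  (Jintegrand_ge0 beta U f Sigma ell Omega V zeta zetas).
apply: filterS J_ae => -[x M] /Jintegrand_eq0P[].
by move=> /Jsuper_eq0P ? /Jsub_eq0P ?.
Qed.
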